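(* Let $G_1=(V,E_1)$ and $G_2=(V,E_2)$ be simple graphs on the same finite vertex set with degree sequences $d_1$ and $d_2$. If $d_1\succeq d_2$, then $\dim\mathcal{A}(\widehat G_1)\le\dim\mathcal{A}(\widehat G_2)$.
   Context: For real sequences $a,b$ of length $n$, with $a[i]$, $b[i]$ denoting the $i$-th largest components, $a$ majorizes $b$, written $a\succeq b$, if $\sum_{i=1}^k a[i]\ge\sum_{i=1}^k b[i]$ for $k=1,\dots,n$, with equality for $k=n$. For a simple graph $G=(V,E)$, $\widehat G$ is the complete graph $(V,\binom{V}{2})$ with pairs in $E$ colored red and the other pairs colored blue. For a 2-colored graph $H=(V,F)$, the alternating cone $\mathcal{A}(H)\subseteq\mathbb{R}^F$ is the set of $x\ge0$ such that at each vertex the sum of $x(e)$ over incident red edges equals the sum over incident blue edges. *)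

From mathcomp Require Import all_boot all_order all_algebra.
From mathcomp Require Import boolp reals.
Set Implicit Arguments. Unset Strict Implicit. Unset Printing Implicit Defensive.
Import Order.TTheory GRing.Theory Num.Theory.
Local Open Scope ring_scope.

Definition simple_graph (V : finType) (adj : rel V) : Prop :=
  symmetric adj /\ irreflexive adj.

Definition pair2 (V : finType) := {e : {set V} | #|e| == 2%N}.

(* Coloring of hat G: a pair is red iff it is an edge of G, blue otherwise. *)
Definition red_pair (V : finType) (adj : rel V) (e : pair2 V) : bool :=
  [exists u, exists v, (val e == [set u; v]) && adj u v].

Definition in_alt_cone (R : realType) (V : finType) (adj : rel V)
    (x : pair2 V -> R) : Prop :=
  (forall e, 0 <= x e) /\
  (forall v : V,
     \sum_(e : pair2 V | (v \in val e) && red_pair adj e) x e =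
     \sum_(e : pair2 V | (v \in val e) && ~~ red_pair adj e) x e).

Definition lin_indep (R : realType) (P : Type) (r : nat) (f : 'I_r -> P -> R)
  : Prop :=
  forall c : 'I_r -> R, (forall p, \sum_(i < r) c i * f i p = 0) ->
    forall i, c i = 0.

(* Dimension of a subset A of R^P (P finite): dimension of its linear span,
   i.e. the maximal number of linearly independent vectors of A. *)
Definition set_dim (R : realType) (P : finType) (A : (P -> R) -> Prop) : nat :=
  \max_(r < #|P|.+1 |
        `[< exists f : 'I_r -> P -> R, (forall i, A (f i)) /\ lin_indep f >])
    (r : nat).

Definition deg (V : finType) (adj : rel V) (v : V) : nat := #|[set u | adj v u]|.

Definition degseq (V : finType) (adj : rel V) : seq nat :=
  sort geq [seq deg adj v | v <- enum V].

Definition majorizes (a b : seq nat) : Prop :=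
  size a = size b /\
  (forall k, (k <= size a)%N -> (sumn (take k b) <= sumn (take k a))%N) /\
  sumn a = sumn b.

(* For the degree function [d] of [G], the alternating cone of [G^] is the cone
   of feasible directions at the vertex [1_G] of the polytope
     P(d) = { y in [0,1]^(V choose 2) : sum_(e | v in e) y e = d v },
   since [x] is in the cone iff [1_G + eps * sigma x] is in [P(d)] for small
   [eps > 0], where [sigma] negates the red coordinates.
   If [d1] majorizes [d2] then, up to relabelling the vertices, [d2] arises
   from [d1] by transfers of one unit of degree from [U] to [W] with
   [d U >= d W + 2] (Muirhead's lemma), and each transfer maps [P(d)] into
   [P(d')] by an injective affine map.  Pulling an independent family of the
   cone of [G1^] into [P(d1)], pushing it to [P(d2)] and back into the cone of
   [G2^] gives an independent family of the same size, after possibly replacing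
   one member by the image of [1_G1]. *)

From mathcomp Require Import all_boot all_order all_algebra.
From mathcomp Require Import boolp reals.
From mathcomp Require Import perm zify ring lra.
Set Implicit Arguments. Unset Strict Implicit. Unset Printing Implicit Defensive.
Import Order.TTheory GRing.Theory Num.Theory.
Local Open Scope ring_scope.

Section LinearIndependence.
Variable R : realType.

Lemma set_dim_le (P : finType) (A B : (P -> R) -> Prop) :
  (forall r (f : 'I_r -> P -> R), (forall i, A (f i)) -> lin_indep f ->
     exists2 g : 'I_r -> P -> R, (forall i, B (g i)) & lin_indep g) ->
  (set_dim A <= set_dim B)%N.
Proof.
move=> AB; apply/bigmax_leqP => r /asboolP [f [Af f_indep]].
have [g Bg g_indep] := AB _ f Af f_indep.
by apply: (@leq_bigmax_cond _ _ (fun i => nat_of_ord i) r); apply/asboolP; exists g.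
Qed.

Lemma lin_indep_scale_reindex (P Q : Type) r (f : 'I_r -> P -> R)
    (s : Q -> R) (pi : Q -> P) (rho : P -> Q) :
  cancel rho pi -> (forall q, s q != 0) ->
  lin_indep f -> lin_indep (fun i q => s q * f i (pi q)).
Proof.
move=> rhoK s_neq0 f_indep c hc; apply: f_indep => p.
have := hc (rho p); under eq_bigr do rewrite mulrCA rhoK.
by rewrite -mulr_sumr => /eqP; rewrite mulf_eq0 (negbTE (s_neq0 _)) => /eqP.
Qed.

(* A dependence among the [p i] puts [q] in the span of the [g i]. *)
Lemma lin_indep_translate (P : Type) r (g p : 'I_r -> P -> R) (q : P -> R)
    (b : 'I_r -> R) :
  lin_indep g -> (forall i, b i != 0) -> (forall i x, p i x = b i * g i x + q x) ->
  lin_indep p \/ exists j, lin_indep (fun i => if i == j then q else p i).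
Proof.
move=> g_indep b_neq0 pE.
have [|p_dep] := pselect (lin_indep p); [by left | right].
have [c [hc [j cj]]] : exists c : 'I_r -> R,
    (forall x, \sum_i c i * p i x = 0) /\ exists j, c j != 0.
  apply: contra_notP p_dep => no_dep c hc i; apply: contrapT => ci.
  by apply: no_dep; exists c; split => //; exists i; apply/eqP.
exists j => e he.
pose C := \sum_i c i; pose D := \sum_i e i.
pose a i := if i == j then 0 else e i * b i.
have span_cq x : \sum_i (c i * b i) * g i x = - (C * q x).
  rewrite (eq_bigr (fun i => c i * p i x - c i * q x)) => [|i _]; last first.
    by rewrite pE; ring.
  by rewrite sumrB hc sub0r /C mulr_suml.
have span_Dq x : \sum_i a i * g i x = - (D * q x).
  rewrite (eq_bigr (fun i => e i * (if i == j then q else p i) x - e i * q x)).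
    by rewrite sumrB he sub0r /D mulr_suml.
  by move=> i _; rewrite /a; case: (i == j); rewrite ?pE; ring.
have D0 : D = 0.
  have : forall x, \sum_i (D * (c i * b i) - C * a i) * g i x = 0.
    move=> x; rewrite (eq_bigr (fun i => D * (c i * b i * g i x) - C * (a i * g i x))).
      by rewrite sumrB -!mulr_sumr span_cq span_Dq; ring.
    by move=> i _; ring.
  move=> /g_indep /(_ j) /eqP; rewrite /a eqxx mulr0 subr0.
  by rewrite !mulf_eq0 (negbTE cj) (negbTE (b_neq0 j)) !orbF => /eqP.
have a0 : forall i, a i = 0 by apply: g_indep => x; rewrite span_Dq D0 mul0r oppr0.
have e0 i : i != j -> e i = 0.
  move=> ij; have /eqP := a0 i; rewrite /a (negbTE ij) mulf_eq0.
  by rewrite (negbTE (b_neq0 i)) orbF => /eqP.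
move=> i; have [->|/e0//] := eqVneq i j.
by move: D0; rewrite /D (bigD1 j) //= big1 ?addr0.
Qed.

End LinearIndependence.

Section RobinHood.
Local Open Scope nat_scope.

Definition psum (a : nat -> nat) k := \sum_(i < k) a i.

Lemma psumS a k : psum a k.+1 = psum a k + a k.
Proof. by rewrite /psum big_ord_recr. Qed.

Lemma psum_nth s k : psum (nth 0 s) k = sumn (take k s).
Proof.
elim: k => [|k IH]; first by rewrite /psum big_ord0 take0.
rewrite psumS IH; have [ks|ks] := ltnP k (size s).
  by rewrite (take_nth 0 ks) sumn_rcons.
by rewrite nth_default // !take_oversize // ?addn0 //; lia.
Qed.

Definition transfer (a : nat -> nat) u w i :=
  if i == u then (a u).-1 else if i == w then (a w).+1 else a i.

Lemma psum_transfer a u w k : u < w -> 0 < a u ->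
  psum (transfer a u w) k + ((u < k) && (k <= w)) = psum a k.
Proof.
move=> uw au; elim: k => [|k IH]; first by rewrite /psum !big_ord0.
rewrite !psumS -IH /transfer.
by case: ifP => [/eqP->|/negbT ku]; [|case: ifP => [/eqP->|/negbT kw]]; lia.
Qed.

Variables (n : nat) (b : nat -> nat).
Hypothesis b_noninc : forall i j, i <= j < n -> b j <= b i.

Definition psum_majorizes a :=
  (forall k, k <= n -> psum b k <= psum a k) /\ psum a n = psum b n.

Definition psum_total a := \sum_(k < n.+1) psum a k.

(* [u] is the first index where [a] and [b] differ and [w + 1] the next
   index where their prefix sums meet again. *)
Lemma transfer_indices a : psum_majorizes a -> ~ (forall i, i < n -> a i = b i) ->
  exists u w, [/\ u < w < n, a w + 2 <= a u &
                  forall k, u < k <= w -> psum b k < psum a k].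
Proof.
move=> [ab_le ab_n] a_neq_b.
have ex_u : exists i, (i < n) && (a i != b i).
  apply: contra_notP a_neq_b => no_u i lt_in.
  by apply: contra_notP no_u => ne; exists i; rewrite lt_in; apply/eqP.
case: (ex_minnP ex_u) => u /andP [un abu] u_min.
have psum_u : psum a u = psum b u.
  apply: eq_bigr => i _; apply/eqP; apply: contraT => ne.
  by have := u_min i; have := ltn_ord i; rewrite ne andbT; lia.
have bau : b u < a u by have := ab_le u.+1 un; rewrite !psumS psum_u; lia.
have ex_m : exists k, [&& u < k, k <= n & psum a k == psum b k].
  by exists n; rewrite un leqnn ab_n eqxx.
case: (ex_minnP ex_m) => m /and3P [um mn /eqP psum_m] m_min.
have lt_psum k : u < k < m -> psum b k < psum a k.
  move=> /andP [uk km]; rewrite ltn_neqAle ab_le 1?andbT; last by lia.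
  by apply/eqP => ee; have := m_min k; rewrite uk ee eqxx; lia.
have m_gt : u.+1 < m by move: psum_m; case: (eqVneq m u.+1) => [->|]; rewrite ?psumS; lia.
exists u, m.-1; split; [lia | | by move=> k ?; apply: lt_psum; lia].
have awbw : a m.-1 < b m.-1.
  have := lt_psum m.-1; move: psum_m; rewrite -(ltn_predK m_gt) !psumS /=; lia.
have := b_noninc (i := u) (j := m.-1); lia.
Qed.

Lemma transfer_majorizes a u w : psum_majorizes a -> u < w < n -> 0 < a u ->
  (forall k, u < k <= w -> psum b k < psum a k) ->
  psum_majorizes (transfer a u w).
Proof.
move=> [ab_le ab_n] /andP [uw wn] au lt_psum.
have hk k := psum_transfer k uw au.
split; last by have := hk n; rewrite ab_n; lia.
move=> k kn; have := hk k; have := ab_le k kn.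
by case: ((u < k) && (k <= w)) / boolP => [/lt_psum|]; lia.
Qed.

Lemma psum_total_transfer a u w : u < w -> u < n -> 0 < a u ->
  psum_total (transfer a u w) < psum_total a.
Proof.
move=> uw un au; rewrite /psum_total.
under [X in _ < X]eq_bigr do rewrite -(psum_transfer _ uw au).
rewrite big_split /= -{1}[X in X < _]addn0 ltn_add2l.
have u1 : u.+1 < n.+1 by [].
by rewrite (bigD1 (Ordinal u1)) //= ltnSn uw.
Qed.

Variable P : (nat -> nat) -> Prop.
Hypothesis P_transfer :
  forall a u w, u < w < n -> a w + 2 <= a u -> P a -> P (transfer a u w).

Lemma majorizes_by_transfers a : psum_majorizes a -> P a ->
  exists2 a', (forall i, i < n -> a' i = b i) & P a'.
Proof.
have [m] := ubnP (psum_total a); elim: m a => // m IH a lt_am a_maj Pa.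
have [a_eq_b|a_neq_b] := pselect (forall i, i < n -> a i = b i).
  by exists a.
have [u [w [/andP [uw wn] auw lt_psum]]] := transfer_indices a_maj a_neq_b.
have au : 0 < a u by lia.
apply: (IH (transfer a u w)).
- by have := psum_total_transfer uw (ltn_trans uw wn) au; lia.
- by apply: transfer_majorizes => //; rewrite uw wn.
- by apply: P_transfer => //; rewrite uw wn.
Qed.

End RobinHood.

Section DegreePolytope.
Variables (R : realType) (V : finType).
Local Notation E := (pair2 V).

Definition degsum (y : E -> R) (v : V) := \sum_(e : E | v \in val e) y e.

Definition in_deg_polytope (d : V -> R) (y : E -> R) :=
  (forall e, 0 <= y e <= 1) /\ (forall v, degsum y v = d v).

Lemma degsumD y z v : degsum (fun e => y e + z e) v = degsum y v + degsum z v.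
Proof. exact: big_split. Qed.

Lemma degsumB y z v : degsum (fun e => y e - z e) v = degsum y v - degsum z v.
Proof. exact: sumrB. Qed.

Lemma degsumZ a y v : degsum (fun e => a * y e) v = a * degsum y v.
Proof. by rewrite /degsum mulr_sumr. Qed.

Lemma eq_in_deg_polytope d d' y y' : d =1 d' -> y =1 y' ->
  in_deg_polytope d y -> in_deg_polytope d' y'.
Proof. by move=> /funext-> /funext->. Qed.

Lemma in_deg_polytope_convex d1 d2 y z t : 0 <= t <= 1 ->
  in_deg_polytope d1 y -> in_deg_polytope d2 z ->
  in_deg_polytope (fun v => (1 - t) * d1 v + t * d2 v)
                  (fun e => (1 - t) * y e + t * z e).
Proof.
move=> /andP [t0 t1] [y01 yd] [z01 zd]; split=> [e|v].
  by have /andP [? ?] := y01 e; have /andP [? ?] := z01 e; apply/andP; split; nra.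
by rewrite degsumD !degsumZ yd zd.
Qed.

Lemma card_pair_perm (s : {perm V}) (e : E) : #|s @: val e| == 2%N.
Proof. by rewrite card_imset ?(valP e) //; apply: perm_inj. Qed.

Definition pair_perm_fun (s : {perm V}) (e : E) : E :=
  exist _ (s @: val e) (card_pair_perm s e).

Lemma pair_perm_inj s : injective (pair_perm_fun s).
Proof. by move=> e1 e2 /(congr1 val) /(imset_inj (@perm_inj _ s)) /val_inj. Qed.

Definition pair_perm s : {perm E} := perm (@pair_perm_inj s).

Lemma in_deg_polytope_perm (s : {perm V}) d y : in_deg_polytope d y ->
  in_deg_polytope (fun v => d (s v)) (fun e => y (pair_perm s e)).
Proof.
move=> [y01 yd]; split=> // v.
rewrite -yd /degsum [RHS](reindex_inj (@perm_inj _ (pair_perm s))) /=.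
by apply: eq_bigl => e; rewrite permE /= mem_imset //; apply: perm_inj.
Qed.

Definition polytope_embeds (d1 d2 : V -> R) :=
  exists (l : R) (pi : {perm E}) (c : E -> R), 0 < l /\
    forall y, in_deg_polytope d1 y -> in_deg_polytope d2 (fun e => l * y (pi e) + c e).

Lemma polytope_embeds_perm (s : {perm V}) d : polytope_embeds d (fun v => d (s v)).
Proof.
exists 1, (pair_perm s), (fun=> 0); split=> [|y /(in_deg_polytope_perm s)].
  exact: ltr01.
by apply: eq_in_deg_polytope => // e; rewrite mul1r addr0.
Qed.

Lemma polytope_embeds_trans d1 d2 d3 :
  polytope_embeds d1 d2 -> polytope_embeds d2 d3 -> polytope_embeds d1 d3.
Proof.
move=> [l1 [pi1 [c1 [l1_gt0 F1]]]] [l2 [pi2 [c2 [l2_gt0 F2]]]].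
exists (l2 * l1), (pi2 * pi1)%g, (fun e => l2 * c1 (pi2 e) + c2 e).
split=> [|y /F1 /F2]; first exact: mulr_gt0.
by apply: eq_in_deg_polytope => // e; rewrite permM; ring.
Qed.

(* With [t = 1 / (d U - d W)], the map [y |-> (1 - t) y + t (z o swap U W)]
   moves one unit of degree from [U] to [W]. *)
Lemma polytope_embeds_transfer d z U W : U != W -> 1 < d U - d W ->
  in_deg_polytope d z ->
  polytope_embeds d (fun v => d v - (v == U)%:R + (v == W)%:R).
Proof.
move=> UW dUW z_in; pose t := (d U - d W)^-1; pose s := tperm U W.
have t_gt0 : 0 < t by rewrite invr_gt0; lra.
have t_lt1 : t < 1 by rewrite invf_lt1 //; lra.
exists (1 - t), 1%g, (fun e => t * z (pair_perm s e)); split=> [|y y_in].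
  by rewrite subr_gt0.
have t01 : 0 <= t <= 1 by apply/andP; split; lra.
apply: eq_in_deg_polytope (in_deg_polytope_convex t01 y_in
  (in_deg_polytope_perm s z_in)) => [v|e]; last by rewrite perm1.
have dUW0 : d U - d W != 0 by rewrite gt_eqF //; lra.
rewrite /s /t; case: tpermP => [->|->|/eqP vU /eqP vW].
- by rewrite eqxx (negbTE UW) /=; field.
- by rewrite eqxx eq_sym (negbTE UW) /=; field.
- by rewrite (negbTE vU) (negbTE vW); ring.
Qed.

End DegreePolytope.

Section RedBlueCompleteGraph.
Variables (R : realType) (V : finType) (adj : rel V).
Hypothesis G : simple_graph adj.
Local Notation E := (pair2 V).

Definition red_ind (e : E) : R := (red_pair adj e)%:R.
Definition red_sign (e : E) : R := if red_pair adj e then -1 else 1.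
Definition degr (v : V) : R := (deg adj v)%:R.

Lemma pair2_set2 (e : E) v : v \in val e -> exists2 u, u != v & val e = [set v; u].
Proof.
have /cards2P [x [y [xy ->]]] := valP e.
rewrite !inE => /orP [] /eqP ->; first by exists y; rewrite // eq_sym.
by exists x; rewrite // setUC.
Qed.

Lemma red_pair_set2 (e : E) u v : val e = [set u; v] -> red_pair adj e = adj u v.
Proof.
case: G => adj_sym adj_irr ev; apply/existsP/idP => [[a /existsP [b]]|uv].
  rewrite ev => /andP [/eqP uvab ab].
  have : a \in [set u; v] by rewrite uvab !inE eqxx.
  have : b \in [set u; v] by rewrite uvab !inE eqxx orbT.
  rewrite !inE => /orP [] /eqP b_eq /orP [] /eqP a_eq; move: ab;
    by rewrite a_eq b_eq ?adj_irr // adj_sym.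
by exists u; apply/existsP; exists v; rewrite ev eqxx.
Qed.

Lemma red_pairs_at v :
  [set val e | e : E & (v \in val e) && red_pair adj e] =
  [set [set v; u] | u in [set u | adj v u]].
Proof.
case: G => _ adj_irr; apply/setP => A; apply/imsetP/imsetP => [[e]|[u]].
  rewrite inE => /andP [ve e_red] ->.
  have [u uv eu] := pair2_set2 ve.
  by exists u; rewrite // inE -(red_pair_set2 eu).
rewrite inE => vu ->.
have uv : v != u by apply: contraTneq vu => <-; rewrite adj_irr.
have vu2 : #|[set v; u]| == 2%N by rewrite cards2 uv.
exists (Sub [set v; u] vu2 : E) => //.
by rewrite inE /= (red_pair_set2 (u := v) (v := u)) // !inE eqxx.
Qed.

Lemma degsum_red_ind v : degsum red_ind v = degr v.
Proof.
case: G => _ adj_irr.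
rewrite /degsum /red_ind -natr_sum -big_mkcondr sum1_card /degr; congr (_%:R).
transitivity #|[set val e | e : E & (v \in val e) && red_pair adj e]|.
  by rewrite card_imset ?cardsE //; exact: val_inj.
rewrite red_pairs_at card_in_imset // => u1 u2; rewrite !inE => vu1 _ e12.
have : u1 \in [set v; u2] by rewrite -e12 !inE eqxx orbT.
by rewrite !inE => /orP [/eqP u1v|/eqP //]; move: vu1; rewrite u1v adj_irr.
Qed.

Lemma red_ind_in_polytope : in_deg_polytope degr red_ind.
Proof.
split=> [e|v]; last exact: degsum_red_ind.
by rewrite /red_ind; case: red_pair; rewrite /= ?lexx ?ler01.
Qed.

Lemma red_sign_neq0 e : red_sign e != 0.
Proof. by rewrite /red_sign; case: red_pair; rewrite ?oppr_eq0 oner_eq0. Qed.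

Lemma red_sign_sqr e : red_sign e * red_sign e = 1.
Proof. by rewrite /red_sign; case: red_pair; rewrite ?mulrNN mulr1. Qed.

Lemma degsum_red_sign x v :
  degsum (fun e => red_sign e * x e) v =
  \sum_(e : E | (v \in val e) && ~~ red_pair adj e) x e -
  \sum_(e : E | (v \in val e) && red_pair adj e) x e.
Proof.
rewrite /degsum (bigID (fun e : E => red_pair adj e)) /= addrC -sumrN.
congr (_ + _); apply: eq_bigr => e /andP [_]; rewrite /red_sign.
  by move=> /negbTE ->; rewrite mul1r.
by move=> ->; rewrite mulN1r.
Qed.

Lemma alt_cone_degsum x : in_alt_cone adj x <->
  (forall e, 0 <= x e) /\ (forall v, degsum (fun e => red_sign e * x e) v = 0).
Proof.
split=> [] [x_ge0 x_alt]; split=> // v; first by rewrite degsum_red_sign x_alt subrr.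
by apply/eqP; rewrite eq_sym -subr_eq0 -degsum_red_sign x_alt.
Qed.

Lemma alt_cone_to_polytope x : in_alt_cone adj x -> exists eps, 0 < eps /\
  in_deg_polytope degr (fun e => red_ind e + eps * (red_sign e * x e)).
Proof.
move=> /alt_cone_degsum [x_ge0 x_alt]; pose eps := (1 + \sum_e x e)^-1.
have sum_ge0 : 0 <= \sum_e x e by apply: sumr_ge0.
have x_le e : x e <= \sum_e x e by rewrite (bigD1 e) //= lerDl sumr_ge0.
have eps_gt0 : 0 < eps by rewrite invr_gt0; lra.
have epsx e : 0 <= eps * x e <= 1.
  apply/andP; split; first by rewrite mulr_ge0 // ltW.
  by rewrite /eps mulrC ler_pdivrMr ?mul1r; have := x_le e; lra.
exists eps; split=> //; split=> [e|v].
  rewrite /red_ind /red_sign; have /andP [? ?] := epsx e.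
  by case: red_pair; rewrite /= ?mulN1r ?mul1r ?mulrN; apply/andP; split; lra.
by rewrite degsumD degsumZ x_alt mulr0 addr0 degsum_red_ind.
Qed.

Lemma polytope_to_alt_cone w : in_deg_polytope degr w ->
  in_alt_cone adj (fun e => red_sign e * (w e - red_ind e)).
Proof.
move=> [w01 w_deg]; apply/alt_cone_degsum; split=> [e|v].
  rewrite /red_sign /red_ind; have /andP [? ?] := w01 e.
  by case: red_pair; rewrite /= ?mulN1r ?mul1r; lra.
rewrite (_ : degsum _ v = degsum (fun e => w e - red_ind e) v).
  by rewrite degsumB w_deg degsum_red_ind subrr.
by apply: eq_bigr => e _; rewrite mulrA red_sign_sqr mul1r.
Qed.

End RedBlueCompleteGraph.

Lemma alt_cone_lin_indep_embeds (R : realType) (V : finType) (adj1 adj2 : rel V) :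
  simple_graph adj1 -> simple_graph adj2 ->
  polytope_embeds (degr R adj1) (degr R adj2) ->
  forall r (f : 'I_r -> pair2 V -> R), (forall i, in_alt_cone adj1 (f i)) ->
    lin_indep f ->
  exists2 g : 'I_r -> pair2 V -> R, (forall i, in_alt_cone adj2 (g i)) & lin_indep g.
Proof.
move=> G1 G2 [l [pi [c [l_gt0 F]]]] r f f_cone f_indep.
have [eps eps_in] := choice (fun i => alt_cone_to_polytope G1 (f_cone i)).
pose back (y : pair2 V -> R) e :=
  red_sign R adj2 e * (l * y (pi e) + c e - red_ind R adj2 e).
have back_cone y : in_deg_polytope (degr R adj1) y -> in_alt_cone adj2 (back y).
  by move=> /F; apply: polytope_to_alt_cone.
pose p i := back (fun e => red_ind R adj1 e + eps i * (red_sign R adj1 e * f i e)).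
pose q := back (red_ind R adj1).
pose s e := red_sign R adj2 e * red_sign R adj1 (pi e).
have g_indep : lin_indep (fun i e => s e * f i (pi e)).
  apply: lin_indep_scale_reindex (permKV pi) _ f_indep => e.
  by rewrite mulf_neq0 ?red_sign_neq0.
have b_neq0 i : l * eps i != 0 by rewrite mulf_neq0 // gt_eqF //; case: (eps_in i).
have pE i e : p i e = l * eps i * (s e * f i (pi e)) + q e.
  by rewrite /p /q /back /s; ring.
have [p_indep|[j pq_indep]] := lin_indep_translate g_indep b_neq0 pE.
  by exists p => // i; apply/back_cone; case: (eps_in i).
exists (fun i => if i == j then q else p i) => // i.
by case: (i == j); apply/back_cone; [apply: red_ind_in_polytope | case: (eps_in i)].
Qed.

Section DegreeOrder.
Variable V : finType.

Definition deg_sorted (adj : rel V) := sort (relpre (deg adj) geq) (enum V).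

Lemma perm_deg_sorted adj : perm_eq (deg_sorted adj) (enum V).
Proof. exact/permEl/perm_sort. Qed.

Lemma size_deg_sorted adj : size (deg_sorted adj) = #|V|.
Proof. by rewrite (perm_size (perm_deg_sorted adj)) cardE. Qed.

Lemma uniq_deg_sorted adj : uniq (deg_sorted adj).
Proof. by rewrite (perm_uniq (perm_deg_sorted adj)) enum_uniq. Qed.

Lemma mem_deg_sorted adj v : v \in deg_sorted adj.
Proof. by rewrite (perm_mem (perm_deg_sorted adj)) mem_enum. Qed.

Lemma index_deg_sorted adj v : (index v (deg_sorted adj) < #|V|)%N.
Proof. by rewrite -(size_deg_sorted adj) index_mem mem_deg_sorted. Qed.

Lemma degseqE (adj : rel V) : degseq adj = map (deg adj) (deg_sorted adj).
Proof. by rewrite /degseq sort_map. Qed.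

Lemma degseq_noninc (adj : rel V) i j : (i <= j < #|V|)%N ->
  (nth 0 (degseq adj) j <= nth 0 (degseq adj) i)%N.
Proof.
move=> /andP [ij jn]; have srt : sorted geq (degseq adj).
  by apply: sort_sorted => x y; apply: leq_total.
apply: (sorted_leq_nth _ _ _ srt); rewrite ?inE ?degseqE ?size_map ?size_deg_sorted //.
- by move=> y x z /= ? ?; lia.
- exact: leqnn.
- lia.
Qed.

End DegreeOrder.

Section Majorization.
Variables (R : realType) (V : finType) (adj1 adj2 : rel V).
Hypothesis G1 : simple_graph adj1.
Local Notation rank v := (index v (deg_sorted adj2)).

Definition align_fun (v : V) := nth v (deg_sorted adj1) (rank v).

Lemma align_inj : injective align_fun.
Proof.
move=> v1 v2; rewrite /align_fun.
rewrite (set_nth_default v1 v2) ?size_deg_sorted ?index_deg_sorted // => /eqP.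
rewrite nth_uniq ?size_deg_sorted ?index_deg_sorted ?uniq_deg_sorted //.
by move=> /eqP /(congr1 (nth v1 (deg_sorted adj2))); rewrite !nth_index ?mem_deg_sorted.
Qed.

Definition align : {perm V} := perm align_inj.

Lemma deg_align v : deg adj1 (align v) = nth 0%N (degseq adj1) (rank v).
Proof.
by rewrite permE /align_fun degseqE (nth_map v) // size_deg_sorted index_deg_sorted.
Qed.

Definition ranked (a : nat -> nat) (v : V) : R := (a (rank v))%:R.

Lemma ranked_transfer a u w : (u < w < #|V|)%N -> (a w + 2 <= a u)%N ->
  polytope_embeds (degr R adj1) (ranked a) ->
  polytope_embeds (degr R adj1) (ranked (transfer a u w)).
Proof.
move=> /andP [uw wn] auw emb; have [l [pi [c [_ F]]]] := emb.
have /card_gt0P [x0 _] : (0 < #|V|)%N by lia.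
pose U := nth x0 (deg_sorted adj2) u; pose W := nth x0 (deg_sorted adj2) w.
have rankU : rank U = u by rewrite index_uniq ?size_deg_sorted ?uniq_deg_sorted //; lia.
have rankW : rank W = w by rewrite index_uniq ?size_deg_sorted ?uniq_deg_sorted.
have UW : U != W by rewrite nth_uniq ?size_deg_sorted ?uniq_deg_sorted ?ltn_eqF //; lia.
have rank_neq v : v != U -> v != W -> (rank v != u) && (rank v != w).
  move=> vU vW; apply/andP; split; [apply: contra vU | apply: contra vW];
    by rewrite /U /W => /eqP <-; rewrite nth_index ?mem_deg_sorted.
apply: (polytope_embeds_trans emb).
rewrite (_ : ranked (transfer a u w) = fun v => ranked a v - (v == U)%:R + (v == W)%:R).
  apply: (polytope_embeds_transfer UW _ (F _ (red_ind_in_polytope R G1))).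
  by rewrite /ranked rankU rankW; move: auw; rewrite -(ler_nat R) natrD; lra.
apply/funext => v; rewrite /ranked /transfer.
have [->|vU] := eqVneq v U.
  by rewrite rankU eqxx (negbTE UW) -subn1 natrB /=; [ring | lia].
have [->|vW] := eqVneq v W.
  by rewrite rankW gtn_eqF // eqxx mulrSr /=; ring.
have /andP [/negbTE -> /negbTE ->] := rank_neq v vU vW.
by rewrite subr0 addr0.
Qed.

Lemma polytope_embeds_majorizes : majorizes (degseq adj1) (degseq adj2) ->
  polytope_embeds (degr R adj1) (degr R adj2).
Proof.
have size_degseq (adj : rel V) : size (degseq adj) = #|V|.
  by rewrite degseqE size_map size_deg_sorted.
case=> _ [take_le sum_eq].
have maj : psum_majorizes #|V| (nth 0%N (degseq adj2)) (nth 0%N (degseq adj1)).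
  split=> [k kn|]; rewrite !psum_nth; first by apply: take_le; rewrite size_degseq.
  by rewrite !take_oversize ?size_degseq ?sum_eq.
have base : polytope_embeds (degr R adj1) (ranked (nth 0%N (degseq adj1))).
  rewrite (_ : ranked _ = fun v => degr R adj1 (align v)).
    exact: polytope_embeds_perm.
  by apply/funext => v; rewrite /degr deg_align.
have [a a_eq] := majorizes_by_transfers (degseq_noninc adj2) ranked_transfer maj base.
rewrite (_ : degr R adj2 = ranked a) //; apply/funext => v.
rewrite /ranked a_eq ?index_deg_sorted // /degr degseqE.
by rewrite (nth_map v) ?size_deg_sorted ?index_deg_sorted // nth_index ?mem_deg_sorted.
Qed.

End Majorization.

Theorem theorem2p10 (R : realType) (V : finType) (adj1 adj2 : rel V)
  (G1 : simple_graph adj1) (G2 : simple_graph adj2)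
  (hmaj : majorizes (degseq adj1) (degseq adj2)) :
  (set_dim (in_alt_cone (R:=R) adj1) <= set_dim (in_alt_cone (R:=R) adj2))%N.
Proof.
apply/set_dim_le/(alt_cone_lin_indep_embeds G1 G2).
exact: polytope_embeds_majorizes G1 hmaj.
Qed.
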